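(* Let $P,Q$ be partially ordered sets, neither of which has an upper bound for the whole set (i.e. $P$ and $Q$ are unbounded). Suppose there exist functions $\varphi:P\to Q$ and $\psi:Q\to P$ such that for every $p\in P$ and $q\in Q$ either $p\le\psi(q)$ or $q\le\varphi(p)$. Then $\operatorname{add}(P)=\operatorname{cof}(P)=\operatorname{cof}(Q)=\operatorname{add}(Q)$.
   Context: For a partially ordered set $P$: $\operatorname{add}(P)$ is the smallest cardinality of a subset $A\subset P$ that has no upper bound in $P$ (i.e. for every $y\in P$ there is $x\in A$ with $x\not\le y$), and $\operatorname{cof}(P)$ is the smallest cardinality of a cofinal subset $A\subset P$ (i.e. for every $x\in P$ there is $y\in A$ with $x\le y$). *)

From Stdlib Require Import Classical.

Set Implicit Arguments.

Definition is_poset (T : Type) (le : T -> T -> Prop) : Prop :=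
  (forall x, le x x) /\
  (forall x y, le x y -> le y x -> x = y) /\
  (forall x y z, le x y -> le y z -> le x z).

Definition unbounded_set (T : Type) (le : T -> T -> Prop) (A : T -> Prop) : Prop :=
  forall y : T, exists x : T, A x /\ ~ le x y.

Definition cofinal_set (T : Type) (le : T -> T -> Prop) (A : T -> Prop) : Prop :=
  forall x : T, exists y : T, A y /\ le x y.

Definition card_le (T U : Type) (A : T -> Prop) (B : U -> Prop) : Prop :=
  exists f : {x : T | A x} -> {y : U | B y},
    forall a1 a2, f a1 = f a2 -> a1 = a2.

Definition equipotent (T U : Type) (A : T -> Prop) (B : U -> Prop) : Prop :=
  exists f : {x : T | A x} -> {y : U | B y},
    (forall a1 a2, f a1 = f a2 -> a1 = a2) /\ (forall b, exists a, f a = b).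

Definition is_add_witness (T : Type) (le : T -> T -> Prop) (A : T -> Prop) : Prop :=
  unbounded_set le A /\ forall B : T -> Prop, unbounded_set le B -> card_le A B.

Definition is_cof_witness (T : Type) (le : T -> T -> Prop) (A : T -> Prop) : Prop :=
  cofinal_set le A /\ forall B : T -> Prop, cofinal_set le B -> card_le A B.

From mathcomp Require Import all_boot boolp wochoice classical_sets functions cardinality.
From Pilot Require Import Defs.

(* The Tukey condition makes [psi] send every unbounded subset of [Q] to a
   cofinal subset of [P], and [phi] every unbounded subset of [P] to a cofinal
   subset of [Q]; and in an unbounded poset every cofinal subset is unbounded.
   Hence add(P) <= cof(P) <= add(Q) <= cof(Q) <= add(P), and Cantor-Bernstein
   closes the cycle.  That these minimal cardinalities are attained needs the
   well-ordering of cardinals: by Zorn's lemma applied to partial embeddings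
   of initial parts of a well-order of [T] into a set [B], either [T] injects
   into [B] or [B] is equipotent to an initial segment, and the least initial
   segment equipotent to a member of a family of subsets of [T] singles out a
   member of least cardinality. *)

Set Implicit Arguments.
Unset Strict Implicit.

Local Open Scope classical_set_scope.
Local Open Scope card_scope.

(* [Defs] measures subsets through Prop-valued sigma types, [cardinality]
   through [{x | x \in A}]. *)
Section SigSetType.
Variables (T : Type) (A : set T).

Definition set_type_of_sig (a : {x | A x}) : A := SigSub (mem_set (proj2_sig a)).
Definition sig_of_set_type (a : A) : {x | A x} := exist A (val a) (set_mem (valP a)).

Lemma set_type_of_sigK : cancel set_type_of_sig sig_of_set_type.
Proof. by move=> [x Ax]; exact: eq_exist. Qed.

Lemma sig_of_set_typeK : cancel sig_of_set_type set_type_of_sig.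
Proof. by move=> a; apply: val_inj. Qed.

End SigSetType.

Lemma card_leE (T U : Type) (A : set T) (B : set U) : card_le A B <-> A #<= B.
Proof.
split=> [[f finj]|/card_leP[f]].
- apply/card_leP/injfunPex.
  exists (set_type_of_sig (A:=B) \o f \o sig_of_set_type (A:=A)) => // a b _ _.
  by apply: inj_comp; [apply: inj_comp (can_inj (@set_type_of_sigK _ B)) finj|
                       exact: can_inj (@sig_of_set_typeK _ A)].
- exists (sig_of_set_type (A:=B) \o f \o set_type_of_sig (A:=A)).
  apply: inj_comp; last exact: can_inj (@set_type_of_sigK _ A).
  by apply: inj_comp; [exact: can_inj (@sig_of_set_typeK _ B)|exact: in2TT 'inj_f].
Qed.

Lemma card_eq_equipotent (T U : Type) (A : set T) (B : set U) :
  A #= B -> equipotent A B.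
Proof.
move=> /card_bijP[f fbij].
pose h := sig_of_set_type (A:=B) \o f \o set_type_of_sig (A:=A).
have hbij : bijective h.
  apply: bij_comp; last exact: Bijective (@set_type_of_sigK _ A) (@sig_of_set_typeK _ A).
  apply: bij_comp fbij.
  exact: Bijective (@sig_of_set_typeK _ B) (@set_type_of_sigK _ B).
exists h; split; first exact: bij_inj.
by case: hbij => g _ gK b; exists (g b); rewrite gK.
Qed.

Lemma exists_well_ordering (T : Type) : exists R : T -> T -> Prop,
  [/\ forall x y, R x y \/ R y x,
      forall x y, R x y -> R y x -> x = y,
      forall x y z, R x y -> R y z -> R x z &
      forall S : set T, (exists x, S x) -> exists2 z, S z & forall x, S x -> R z x].
Proof.
have [R Rwo] := well_ordering_principle {classic T}.
have Rchain : wo_chain R predT by move=> A _; exact: Rwo.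
have Ranti x y : R x y -> R y x -> x = y.
  by move=> Rxy Ryx; apply: (wo_chain_antisymmetric Rchain); rewrite ?Rxy.
have Rmin (S : set T) : (exists x, S x) -> exists2 z, S z & forall x, S x -> R z x.
  move=> [x Sx]; have [|z [[/asboolP Sz zmin] _]] := Rwo [pred y | `[< S y >]].
    by exists x; apply/asboolP.
  by exists z => // y Sy; apply: zmin; apply/asboolP.
exists R; split => //.
- by move=> x y; have /orP[] := @wo_chainW _ _ _ Rchain x y isT isT; [left|right].
- move=> x y z Rxy Ryz.
  have [m xyz_m m_min] :=
    Rmin (fun w => [\/ w = x, w = y | w = z]) (ex_intro _ x (Or31 _ _ erefl)).
  case: xyz_m => ?; subst m.
  + exact: m_min (Or33 _ _ erefl).
  + by rewrite (Ranti x y Rxy (m_min x (Or31 _ _ erefl))).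
  + by rewrite -(Ranti y z Ryz (m_min y (Or32 _ _ erefl))).
Qed.

Section WellOrdered.
Variables (T : Type) (R : T -> T -> Prop).
Hypothesis R_total : forall x y, R x y \/ R y x.
Hypothesis R_anti : forall x y, R x y -> R y x -> x = y.
Hypothesis R_trans : forall x y z, R x y -> R y z -> R x z.
Hypothesis R_min :
  forall S : set T, (exists x, S x) -> exists2 z, S z & forall x, S x -> R z x.

Definition segment (x : T) : set T := [set y | R y x /\ y <> x].

Lemma segment_subset x y : R x y -> segment x `<=` segment y.
Proof.
move=> Rxy z [Rzx zx]; split; first exact: R_trans Rzx Rxy.
by move=> zy; subst z; apply: zx; exact: R_anti.
Qed.

Section InitialEmbedding.
Variables (U : Type) (B : set U).

Definition initial_embedding (G : set (T * U)) :=
  [/\ forall p q, G p -> G q -> p.1 = q.1 -> p = q,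
      forall p q, G p -> G q -> p.2 = q.2 -> p = q,
      snd @` G `<=` B &
      forall p x, G p -> R x p.1 -> (fst @` G) x].

Lemma initial_embedding_bigcup (F : set (set (T * U))) :
  F `<=` initial_embedding -> total_on F subset ->
  initial_embedding (\bigcup_(G in F) G).
Proof.
move=> Femb Ftot.
have common p q : (\bigcup_(G in F) G) p -> (\bigcup_(G in F) G) q ->
    exists2 G, F G & G p /\ G q.
  move=> [G FG Gp] [H FH Hq].
  have [GH|HG] := Ftot G H FG FH.
  - by exists H => //; split=> //; exact: GH.
  - by exists G => //; split=> //; exact: HG.
split.
- move=> p q Up Uq; have [G /Femb[Ginj _ _ _] [Gp Gq]] := common p q Up Uq.
  exact: Ginj.
- move=> p q Up Uq; have [G /Femb[_ Ginj _ _] [Gp Gq]] := common p q Up Uq.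
  exact: Ginj.
- by move=> _ [p [G /Femb[_ _ GB _] Gp] <-]; apply: GB; exists p.
- move=> p x [G FG Gp] Rxp; have [_ _ _ /(_ p x Gp Rxp)] := Femb G FG.
  by case=> q Gq <-; exists q => //; exists G.
Qed.

Lemma initial_embedding_extend G x0 b :
  initial_embedding G -> segment x0 = fst @` G -> B b -> ~ (snd @` G) b ->
  initial_embedding (G `|` [set (x0, b)]).
Proof.
move=> [inj1 inj2 GB Gdown] domG Bb nb.
have x0_notin : ~ (fst @` G) x0 by rewrite -domG => -[].
split.
- move=> p q [Gp|->] [Gq|->] //=; first exact: inj1.
  + by move=> e; case: x0_notin; exists p.
  + by move=> e; case: x0_notin; exists q.
- move=> p q [Gp|->] [Gq|->] //=; first exact: inj2.
  + by move=> e; case: nb; exists p.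
  + by move=> e; case: nb; exists q.
- by move=> _ [p [Gp|->] <-] //; apply: GB; exists p.
- move=> p x [Gp|->] Rxp /=.
  + by have [q Gq <-] := Gdown p x Gp Rxp; exists q => //; left.
  + have [->|xx0] := pselect (x = x0); first by exists (x0, b) => //; right.
    have [q Gq <-] : (fst @` G) x by rewrite -domG.
    by exists q => //; left.
Qed.

Lemma card_le_or_eq_segment : [set: T] #<= B \/ exists x, segment x #= B.
Proof.
have [G [Gemb Gmax]] := Zorn_bigcup initial_embedding_bigcup.
case: (Gemb) => inj1 inj2 GB Gdown.
have dom_card : fst @` G #= G.
  by apply: inj_card_eq => p q /set_mem Gp /set_mem Gq; exact: inj1.
have range_card : snd @` G #= G.
  by apply: inj_card_eq => p q /set_mem Gp /set_mem Gq; exact: inj2.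
have [dom_total|/existsNP[x1 x1_notin]] := pselect (forall x, (fst @` G) x).
  left; have -> : [set: T] = fst @` G by apply/seteqP; split=> x // _; exact: dom_total.
  by rewrite (card_le_eql dom_card) -(card_le_eql range_card); exact: subset_card_le.
right; have [x0 x0_notin x0_min] := R_min (ex_intro (~` (fst @` G)) x1 x1_notin).
have segG : segment x0 = fst @` G.
  apply/seteqP; split=> y.
  - move=> [Ryx0 yx0]; apply: contra_notP yx0 => y_notin.
    exact: R_anti Ryx0 (x0_min y y_notin).
  - move=> [[x u] Gxu <-] /=; split.
      by have [//|Rx0x] := R_total x x0; case: x0_notin; exact: Gdown Gxu Rx0x.
    by move=> xx0; subst x; case: x0_notin; exists (x0, u).
have rangeB : snd @` G = B.
  apply/seteqP; split=> // b Bb; have [//|b_notin] := pselect ((snd @` G) b).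
  exfalso; apply: (Gmax (G `|` [set (x0, b)])); last exact: initial_embedding_extend.
  split; first exact: subsetUl.
  by move=> /(_ (x0, b) (or_intror erefl)) Gx0b; case: x0_notin; exists (x0, b).
by exists x0; rewrite segG -rangeB (card_eql dom_card) card_eq_sym.
Qed.

End InitialEmbedding.

Lemma exists_card_min_wo (F : set (set T)) :
  F setT -> exists2 A, F A & forall B, F B -> A #<= B.
Proof.
move=> FT; pose S := [set x | exists2 A, F A & segment x #= A].
have [/R_min[x0 [A0 FA0 A0x0] x0_min]|no_segment] := pselect (exists x, S x).
  exists A0 => // B FB; have [TB|[x xB]] := card_le_or_eq_segment B.
    exact: card_le_trans (card_leT A0) TB.
  rewrite -(card_le_eql A0x0) -(card_le_eqr xB); apply: subset_card_le.
  by apply: segment_subset; apply: x0_min; exists B.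
exists setT => // B FB; have [//|[x xB]] := card_le_or_eq_segment B.
by case: no_segment; exists x, B.
Qed.

End WellOrdered.

Lemma exists_card_min (T : Type) (F : set (set T)) :
  F setT -> exists A, F A /\ forall B, F B -> card_le A B.
Proof.
move=> FT; have [R [R_total R_anti R_trans R_min]] := exists_well_ordering T.
have [A FA Amin] := exists_card_min_wo R_total R_anti R_trans R_min FT.
by exists A; split=> // B /Amin/card_leE.
Qed.

Lemma cofinal_unbounded (T : Type) (le : T -> T -> Prop) (B : set T) :
  (forall x y z, le x y -> le y z -> le x z) -> unbounded_set le setT ->
  cofinal_set le B -> unbounded_set le B.
Proof.
move=> le_trans unbT cofB y; have [x [_ xy]] := unbT y; have [b [Bb xb]] := cofB x.
by exists b; split=> // by_; apply: xy; exact: le_trans xb by_.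
Qed.

Lemma cofinal_image_unbounded (P Q : Type) (leP : P -> P -> Prop) (leQ : Q -> Q -> Prop)
    (phi : P -> Q) (psi : Q -> P) (D : set Q) :
  (forall p q, leP p (psi q) \/ leQ q (phi p)) ->
  unbounded_set leQ D -> cofinal_set leP (psi @` D).
Proof.
move=> tukey unbD p; have [d [Dd not_d_phip]] := unbD (phi p).
by exists (psi d); split; [exists d | case: (tukey p d)].
Qed.

Theorem lemma5p2 (P : Type) (leP : P -> P -> Prop) (Q : Type) (leQ : Q -> Q -> Prop)
  (HP : is_poset leP) (HQ : is_poset leQ)
  (HPunb : unbounded_set leP (fun _ => True))
  (HQunb : unbounded_set leQ (fun _ => True))
  (phi : P -> Q) (psi : Q -> P)
  (Htukey : forall (p : P) (q : Q), leP p (psi q) \/ leQ q (phi p)) :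
  (exists A, is_add_witness leP A) /\
  (exists B, is_cof_witness leP B) /\
  (exists C, is_cof_witness leQ C) /\
  (exists D, is_add_witness leQ D) /\
  (forall (A B : P -> Prop) (C D : Q -> Prop),
      is_add_witness leP A -> is_cof_witness leP B ->
      is_cof_witness leQ C -> is_add_witness leQ D ->
      equipotent A B /\ equipotent B C /\ equipotent C D).
Proof.
case: HP => P_refl [_ P_trans]; case: HQ => Q_refl [_ Q_trans].
have tukey_sym q p : leQ q (phi p) \/ leP p (psi q) by apply/or_comm.
split; first exact: exists_card_min.
split; first by apply: exists_card_min => p; exists p; split=> //; exact: P_refl.
split; first by apply: exists_card_min => q; exists q; split=> //; exact: Q_refl.
split; first exact: exists_card_min.
move=> A B C D [unbA minA] [cofB minB] [cofC minC] [unbD minD].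
have AB : A #<= B by apply/card_leE/minA/cofinal_unbounded.
have DC : D #<= C by apply/card_leE/minD/cofinal_unbounded.
have BD : B #<= D.
  apply: card_le_trans (card_image_le psi D).
  by apply/card_leE/minB; exact: cofinal_image_unbounded.
have CA : C #<= A.
  apply: card_le_trans (card_image_le phi A).
  by apply/card_leE/minC; exact: cofinal_image_unbounded tukey_sym unbA.
have BC : B #<= C := card_le_trans BD DC.
have CB : C #<= B := card_le_trans CA AB.
split; [|split]; apply/card_eq_equipotent/Cantor_Bernstein => //.
- exact: card_le_trans BC CA.
- exact: card_le_trans CB BD.
Qed.
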